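(* Let $a,\epsilon,\kappa\in\mathbb{R}$ and let $p:\mathbb{R}\to\mathbb{R}$ be a $2\pi$-periodic function with zero mean. Consider the damped Hill equation $$\ddot{\theta} + 2\kappa\dot{\theta} + \big(a+\epsilon p(t)\big)\theta = 0,$$ and let $\Theta(t,0)$ denote its $2\times 2$ state transition matrix in the state $(\theta,\dot\theta)^{\mathrm T}$. Define the related undamped Hill equation $$\ddot{z} + \big(a-\kappa^2+\epsilon p(t)\big) z = 0,$$ with $2\times 2$ state transition matrix $\Phi(t,0;a,\epsilon)$ in the state $(z,\dot z)^{\mathrm T}$. If $$\big|\operatorname{tr}\,\Phi(2\pi,0;a,\epsilon)\big| > 2\cosh(2\pi\kappa),$$ then the damped Hill equation is unstable, i.e. its monodromy matrix $\Theta(2\pi,0)$ has an eigenvalue of modulus strictly greater than $1$.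
   Context: For a linear system $\dot x = A(t)x$ with $2\pi$-periodic $A$, the state transition matrix $\Theta(t,0)$ is the matrix solution of $\dot\Theta = A(t)\Theta$, $\Theta(0,0)=I$, so that $x(t)=\Theta(t,0)x(0)$; the monodromy matrix is $\Theta(2\pi,0)$. The system is called unstable when the monodromy matrix has an eigenvalue outside the closed unit disk. Here $\kappa$ is the viscous damping coefficient, $a$ the mean spring constant, and $\epsilon$ the parametric forcing amplitude. *)

From HB Require Import structures.
From mathcomp Require Import all_boot all_order all_algebra.
From mathcomp Require Import all_classical all_reals all_analysis.
From mathcomp Require Import complex.
Set Implicit Arguments. Unset Strict Implicit. Unset Printing Implicit Defensive.
Import Order.TTheory GRing.Theory Num.Theory.
Import numFieldNormedType.Exports.
Local Open Scope ring_scope.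

Definition coshR {R : realType} (x : R) : R := (expR x + expR (- x)) / 2.

(* Companion matrix of  x'' + c x' + q(t) x = 0  in the state (x, x')^T:
   A(t) = [[0, 1], [-q(t), -c]] *)
Definition companion {R : realType} (c : R) (q : R -> R) (t : R) : 'M[R]_2 :=
  \matrix_(i < 2, j < 2)
    (if i == 0 :> nat then (if j == 0 :> nat then 0 else 1)
     else (if j == 0 :> nat then - q t else - c)).

Definition is_state_transition {R : realType} (A : R -> 'M[R]_2)
    (Theta : R -> 'M[R]_2) : Prop :=
  Theta 0 = 1%:M /\
  forall (t : R) (i j : 'I_2),
    is_derive t 1 (fun s => Theta s i j) ((A t *m Theta t) i j).

Definition has_eigenvalue_outside_unit_disk {R : realType} (M : 'M[R]_2) : Prop :=
  exists lambda : R[i],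
    eigenvalue (map_mx (fun x : R => (x%:C)%C) M) lambda /\ 1 < `|lambda|.

From HB Require Import structures.
From mathcomp Require Import all_boot all_order all_algebra.
From mathcomp Require Import all_classical all_reals all_analysis.
From mathcomp Require Import complex.
From mathcomp Require Import ring lra.
Import Order.TTheory GRing.Theory Num.Theory.
Import numFieldNormedType.Exports.
Set Implicit Arguments. Unset Strict Implicit. Unset Printing Implicit Defensive.
Local Open Scope ring_scope.

(* The substitution z = e^(kappa t) theta turns the damped equation into the
   undamped one, so that e^(kappa t) Theta(t,0) is similar to Phi(t,0) (through
   the shear taking (theta, theta') to (theta, theta' + kappa theta)).  Hence
   tr Theta(2 pi) = e^(-2 pi kappa) tr Phi(2 pi), and since Phi has Wronskian
   det Phi = 1, det Theta(2 pi) = e^(-4 pi kappa).  The characteristic polynomial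
   l^2 - T l + D of Theta(2 pi) then has a real root of modulus > 1 as soon as
   |T| > 1 + D, which is exactly |tr Phi(2 pi)| > 2 cosh(2 pi kappa). *)

(* The rules of [is_derive] state derivatives with [*:], R acting on itself. *)
Lemma scaleRE (R : realType) (a b : R) : a *: b = a * b.
Proof. by []. Qed.

Lemma ord2_cases (i : 'I_2) : i = 0 \/ i = 1.
Proof. by case: i => [[|[|//]] ?]; [left | right]; apply/val_inj. Qed.

Lemma mulmx2E (R : pzSemiRingType) (A B : 'M[R]_2) i j :
  (A *m B) i j = A i 0 * B 0 j + A i 1 * B 1 j.
Proof.
have -> : 1 = lift ord0 ord0 :> 'I_2 by apply/val_inj.
by rewrite mxE !big_ord_recl big_ord0 addr0.
Qed.

Lemma mxtrace2 (R : pzSemiRingType) (M : 'M[R]_2) : \tr M = M 0 0 + M 1 1.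
Proof.
have -> : 1 = lift ord0 ord0 :> 'I_2 by apply/val_inj.
by rewrite /mxtrace !big_ord_recl big_ord0 addr0.
Qed.

Lemma det_mx2 (R : comPzRingType) (M : 'M[R]_2) :
  \det M = M 0 0 * M 1 1 - M 0 1 * M 1 0.
Proof.
rewrite (expand_det_row M 0) !big_ord_recl big_ord0 /cofactor !det_mx11 !mxE /=.
have -> : lift ord0 ord0 = 1 :> 'I_2 by apply/val_inj.
have -> : lift 1 0 = 0 :> 'I_2 by apply/val_inj.
by rewrite expr0 expr1 mul1r mulN1r addr0 mulrN.
Qed.

Lemma scaled_similar_trace_det (F : fieldType) n (S M N : 'M[F]_n) (c : F) :
  S \in unitmx -> c *: (S *m M) = N *m S ->
  c * \tr M = \tr N /\ c ^+ n * \det M = \det N.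
Proof.
move=> S_unit SM_NS; split.
  rewrite -mxtraceZ -(mulKmx S_unit (c *: M)) -scalemxAr SM_NS.
  by rewrite mxtrace_mulC -mulmxA mulmxV // mulmx1.
have detS : \det S != 0 by rewrite -unitfE -unitmxE.
apply: (mulIf detS).
by rewrite -det_mulmx -SM_NS detZ det_mulmx -mulrA (mulrC (\det M)).
Qed.

Lemma eigenvalue_mx2 (F : fieldType) (M : 'M[F]_2) (l : F) :
  l ^+ 2 - \tr M * l + \det M = 0 -> eigenvalue M l.
Proof.
move=> char_l; have /det0P[v v_neq0 v_ker] : \det (l%:M - M) == 0.
  by apply/eqP; rewrite -char_l det_mx2 mxtrace2 det_mx2 !mxE /=; ring.
apply/eigenvalueP; exists v => //.
by apply/eqP; rewrite -mul_mx_scalar eq_sym -subr_eq0 -mulmxBr v_ker.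
Qed.

Lemma normc_real (R : rcfType) (x : R) : `|(x%:C)%C| = (`|x|%:C)%C.
Proof. by rewrite normc_def /= expr0n addr0 sqrtr_sqr. Qed.

Lemma quadratic_root_outside_unit_disk (R : rcfType) (T D : R) :
  0 < D -> 1 + D < `|T| -> exists l : R, l ^+ 2 - T * l + D = 0 /\ 1 < `|l|.
Proof.
move=> D_gt0 T_gt.
have disc_ge0 : 0 <= T ^+ 2 - 4 * D.
  rewrite -real_normK ?num_real //.
  have := sqr_ge0 (1 - D); have := normr_ge0 T; nra.
set s := Num.sqrt (T ^+ 2 - 4 * D).
have s_ge0 : 0 <= s by apply: sqrtr_ge0.
have s2 : s ^+ 2 = T ^+ 2 - 4 * D by rewrite sqr_sqrtr.
have [T_ge0 | T_lt0] := leP 0 T.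
  rewrite ger0_norm // in T_gt.
  exists ((T + s) / 2); split; last rewrite ger0_norm; nra.
rewrite ltr0_norm // in T_gt.
exists ((T - s) / 2); split; last rewrite ltr0_norm; nra.
Qed.

Lemma tr_det_eigenvalue_outside_unit_disk (R : realType) (M : 'M[R]_2) :
  0 < \det M -> 1 + \det M < `|\tr M| -> has_eigenvalue_outside_unit_disk M.
Proof.
move=> det_gt0 tr_gt.
have [l [char_l l_gt1]] := quadratic_root_outside_unit_disk det_gt0 tr_gt.
exists (l%:C)%C; split; last by rewrite normc_real ltcR.
by rewrite (eigenvalue_map (real_complex R)) eigenvalue_mx2.
Qed.

Definition is_matrix_solution (R : realType) (A Psi : R -> 'M[R]_2) : Prop :=
  forall (t : R) (i j : 'I_2),
    is_derive t 1 (fun s => Psi s i j) ((A t *m Psi t) i j).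

Lemma companion_mulmx0 (R : realType) (c : R) q t (M : 'M[R]_2) j :
  (companion c q t *m M) 0 j = M 1 j.
Proof. by rewrite mulmx2E !mxE /= mul0r mul1r add0r. Qed.

Lemma companion_mulmx1 (R : realType) (c : R) q t (M : 'M[R]_2) j :
  (companion c q t *m M) 1 j = - q t * M 0 j - c * M 1 j.
Proof. by rewrite mulmx2E !mxE /= (mulNr c). Qed.

Section HillEquation.
Variables (R : realType) (Q : R -> R).

Definition hill_solution (u v : R -> R) : Prop :=
  forall t : R, is_derive t 1 u (v t) /\ is_derive t 1 v (- Q t * u t).

Lemma hill_wronskian_const u v z w : hill_solution u v -> hill_solution z w ->
  forall t, u t * w t - v t * z t = u 0 * w 0 - v 0 * z 0.
Proof.
move=> uv zw t; apply: (is_derive_0_is_cst (f := fun s => u s * w s - v s * z s)).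
move=> s; have [du dv] := uv s; have [dz dw] := zw s.
by apply: is_derive_eq; rewrite !scaleRE; ring.
Qed.

(* No uniqueness theorem for ODEs is needed: the constant Wronskians
   W(u0,u) = v 0, W(u1,u) = - u 0 and W(u0,u1) = 1 determine (u, v). *)
Lemma hill_solution_decomp u0 v0 u1 v1 u v :
  hill_solution u0 v0 -> hill_solution u1 v1 -> hill_solution u v ->
  u0 0 = 1 -> v0 0 = 0 -> u1 0 = 0 -> v1 0 = 1 ->
  forall t, u t = u 0 * u0 t + v 0 * u1 t /\ v t = u 0 * v0 t + v 0 * v1 t.
Proof.
move=> sol0 sol1 sol u00 v00 u10 v10 t.
have W01 := hill_wronskian_const sol0 sol1 t.
have W0 := hill_wronskian_const sol0 sol t.
have W1 := hill_wronskian_const sol1 sol t.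
rewrite u00 v00 u10 v10 !(mul1r, mul0r, subr0, sub0r) in W01 W0 W1.
have -> : u 0 = v1 t * u t - u1 t * v t by rewrite -[u 0]opprK -W1 opprB.
rewrite -W0; split.
- by transitivity (u t * (u0 t * v1 t - v0 t * u1 t)); [rewrite W01 mulr1 | ring].
- by transitivity (v t * (u0 t * v1 t - v0 t * u1 t)); [rewrite W01 mulr1 | ring].
Qed.

Lemma matrix_solution_hill (Psi : R -> 'M[R]_2) :
  is_matrix_solution (companion 0 Q) Psi ->
  forall j, hill_solution (fun s => Psi s 0 j) (fun s => Psi s 1 j).
Proof.
move=> dPsi j t; split.
- by have := dPsi t 0 j; rewrite companion_mulmx0.
- by have := dPsi t 1 j; rewrite companion_mulmx1 mul0r subr0.
Qed.

Lemma hill_transition_mulmx (Phi Psi : R -> 'M[R]_2) :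
  is_state_transition (companion 0 Q) Phi ->
  is_matrix_solution (companion 0 Q) Psi -> forall t, Psi t = Phi t *m Psi 0.
Proof.
move=> [Phi0 dPhi] dPsi t; apply/matrixP => i j.
have Phi0E k l : Phi 0 k l = (k == l)%:R by rewrite Phi0 mxE.
have [Psi0E Psi1E] := hill_solution_decomp (matrix_solution_hill dPhi 0)
  (matrix_solution_hill dPhi 1) (matrix_solution_hill dPsi j)
  (Phi0E 0 0) (Phi0E 1 0) (Phi0E 0 1) (Phi0E 1 1) t.
by rewrite mulmx2E; have [] := ord2_cases i => ->; rewrite ?Psi0E ?Psi1E; ring.
Qed.

Lemma det_hill_transition (Phi : R -> 'M[R]_2) :
  is_state_transition (companion 0 Q) Phi -> forall t, \det (Phi t) = 1.
Proof.
move=> [Phi0 dPhi] t.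
have := hill_wronskian_const (matrix_solution_hill dPhi 0) (matrix_solution_hill dPhi 1) t.
by rewrite det_mx2 [Phi t 0 1 * _]mulrC Phi0 !mxE /= => ->; rewrite mulr1 mulr0 subr0.
Qed.

End HillEquation.

Definition shear_mx (R : pzRingType) (k : R) : 'M[R]_2 := 1%:M + k *: delta_mx 1 0.

Lemma shear_mxE (R : pzRingType) (k : R) (M : 'M[R]_2) j :
  (shear_mx k *m M) 0 j = M 0 j /\ (shear_mx k *m M) 1 j = k * M 0 j + M 1 j.
Proof.
by rewrite !mulmx2E !mxE /= !(mulr1n, mulr0n, mulr0, mulr1, mul0r, mul1r, addr0, add0r).
Qed.

Lemma shear_mx_unit (R : comUnitRingType) (k : R) : shear_mx k \in unitmx.
Proof.
rewrite unitmxE det_mx2 !mxE /=.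
rewrite !(mulr1n, mulr0n, mulr0, mulr1, mul0r, mul1r, addr0, add0r, subr0).
exact: unitr1.
Qed.

Section DampedHillEquation.
Variables (R : realType) (k : R) (q : R -> R).

Lemma damped_shift_solution (Theta : R -> 'M[R]_2) :
  is_matrix_solution (companion (2 * k) q) Theta ->
  is_matrix_solution (companion 0 (fun t => q t - k ^+ 2))
    (fun t => expR (t * k) *: (shear_mx k *m Theta t)).
Proof.
move=> dTheta t i j.
have Psi0E s : (expR (s * k) *: (shear_mx k *m Theta s)) 0 j = expR (s * k) * Theta s 0 j.
  by rewrite mxE (shear_mxE k (Theta s) j).1.
have Psi1E s : (expR (s * k) *: (shear_mx k *m Theta s)) 1 j =
    expR (s * k) * (k * Theta s 0 j + Theta s 1 j).
  by rewrite mxE (shear_mxE k (Theta s) j).2.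
have dx := dTheta t 0 j; rewrite companion_mulmx0 in dx.
have dy := dTheta t 1 j; rewrite companion_mulmx1 in dy.
have [] := ord2_cases i => ->.
- rewrite companion_mulmx0 Psi1E (funext Psi0E).
  by apply: is_derive_eq; rewrite !scaleRE; ring.
- rewrite companion_mulmx1 Psi0E Psi1E (funext Psi1E).
  by apply: is_derive_eq; rewrite !scaleRE; ring.
Qed.

Lemma damped_transition_similar (Theta Phi : R -> 'M[R]_2) :
  is_state_transition (companion (2 * k) q) Theta ->
  is_state_transition (companion 0 (fun t => q t - k ^+ 2)) Phi ->
  forall t, expR (t * k) *: (shear_mx k *m Theta t) = Phi t *m shear_mx k.
Proof.
case=> Theta0 dTheta hPhi t.
rewrite (hill_transition_mulmx hPhi (damped_shift_solution dTheta) t).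
by rewrite mul0r expR0 scale1r Theta0 mulmx1.
Qed.

End DampedHillEquation.

Lemma two_coshR (R : realType) (x : R) :
  2 * coshR x = expR x * (1 + (expR x ^+ 2)^-1).
Proof. by rewrite /coshR expRN; field; rewrite gt_eqF ?expR_gt0. Qed.

Theorem theorem3p1 (R : realType) (a epsilon kappa : R) (p : R -> R)
  (Theta Phi : R -> 'M[R]_2) :
  continuous p ->
  (forall t : R, p (t + 2 * pi) = p t) ->
  (\int[@lebesgue_measure R]_(t in `[0%R, (2 * pi)%R]) (p t)%:E = 0)%E ->
  is_state_transition (companion (2 * kappa) (fun t => a + epsilon * p t)) Theta ->
  is_state_transition (companion 0 (fun t => a - kappa ^+ 2 + epsilon * p t)) Phi ->
  2 * coshR (2 * pi * kappa) < `|\tr (Phi (2 * pi))| ->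
  has_eigenvalue_outside_unit_disk (Theta (2 * pi)).
Proof.
move=> _ _ _ hTheta hPhi tr_Phi_gt.
have {}hPhi : is_state_transition
    (companion 0 (fun t => a + epsilon * p t - kappa ^+ 2)) Phi.
  suff -> : (fun t => a + epsilon * p t - kappa ^+ 2) =
            (fun t => a - kappa ^+ 2 + epsilon * p t) by [].
  by apply/funext => t; ring.
have [trE detE] := scaled_similar_trace_det (shear_mx_unit kappa)
  (damped_transition_similar hTheta hPhi (2 * pi)).
rewrite (det_hill_transition hPhi) in detE.
set E := expR (2 * pi * kappa) in trE detE.
have E_gt0 : 0 < E by apply: expR_gt0.
have E2_neq0 : E ^+ 2 != 0 by rewrite expf_neq0 // gt_eqF.
have detTheta : \det (Theta (2 * pi)) = (E ^+ 2)^-1.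
  by apply: (mulfI E2_neq0); rewrite detE mulfV.
apply: tr_det_eigenvalue_outside_unit_disk; rewrite detTheta.
  by rewrite invr_gt0 exprn_gt0.
by rewrite -(ltr_pM2l E_gt0) -two_coshR -(gtr0_norm E_gt0) -normrM trE.
Qed.
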